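(* Let $X$ be a set, $B=(B,+,0)$ a unitary magma, $(A,k,q,s,p)$ a retraction point from $X$ to $B$, and $\varphi(x,b,x',b')=q\big((k(x)+s(b))+(k(x')+s(b'))\big)$. Write $0$ also for $q(0)\in X$ and set, for $x,x'\in X$, $b,b'\in B$: $x+_{b'}x'=\varphi(x,0,x',b')$, $\xi^{x}(b,x')=\varphi(x,b,x',0)$, $\xi_{b'}(b,x')=\varphi(0,b,x',b')$, $\rho^{b}_{b'}(x)=\varphi(x,b,0,b')$, $x+x'=\varphi(x,0,x',0)$, $\xi(b,x')=\varphi(0,b,x',0)$, $\rho_{b'}(x)=\varphi(x,0,0,b')$. Consider the following conditions, each required for all $x,x'\in X$, $b,b'\in B$, $a\in A$: (kks) $k(x)+(k(x')+s(b))=(k(x)+k(x'))+s(b)$; (sks) $s(b)+(k(x)+s(b'))=(s(b)+k(x))+s(b')$; (1ks) $a+(k(x)+s(b))=(a+k(x))+s(b)$; (kss) $k(x)+(s(b)+s(b'))=(k(x)+s(b))+s(b')$; (ksk) $k(x)+(s(b)+k(x'))=(k(x)+s(b))+k(x')$; (ks1) $k(x)+(s(b)+a)=(k(x)+s(b))+a$. Then, for all $x,x'\in X$ and $b,b'\in B$: 1. if (kks) holds, then $x+_{b'}x'=\rho_{b'}(x+x')$; 2. if (sks) holds, then $\xi_{b'}(b,x')=\rho^{b}_{b'}(\xi(b,x'))$; 3. if (1ks) holds, then $\varphi(x,b,x',b')=\rho^{b}_{b'}(\xi^{x}(b,x'))$; 4. if (kss) holds, then $\rho^{b}_{b'}(x)=\rho_{b+b'}(x)$;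 5. if (ksk) holds, then $\xi^{x}(b,x')=x+_{b}\xi(b,x')$; 6. if (ks1) holds, then $\varphi(x,b,x',b')=x+_{b+b'}\xi_{b'}(b,x')$; 7. if (kks) and (ksk) hold, then $\xi^{x}(b,x')=\rho_{b}(x+\xi(b,x'))$; 8. if (sks) and (kss) hold, then $\xi_{b'}(b,x')=\rho_{b+b'}(\xi(b,x'))$; 9. if (1ks), (kss) and (ksk) hold, then $\varphi(x,b,x',b')=\rho_{b+b'}(x+\xi(b,x'))$; 10. if (ks1), (kks) and (sks) hold, then $\varphi(x,b,x',b')=\rho_{b+b'}(x+\xi(b,x'))$.
   Context: A unitary magma is a set with a binary operation $+$ and an element $0$ with $b+0=b=0+b$ for all $b$; morphisms preserve $+$ and $0$. Given a set $X$ and a unitary magma $B$, a retraction point from $X$ to $B$ is a tuple $(A,k,q,s,p)$ where $A=(A,+,0)$ is a unitary magma, $k\colon X\to A$ and $q\colon A\to X$ are maps, $s\colon B\to A$ and $p\colon A\to B$ are morphisms of unitary magmas, and $p(s(b))=b$, $q(k(x))=x$, $p(k(x))=0$, $q(s(b))=q(0)$, and $k(q(a))+s(p(a))=a$ for all $x\in X$, $b\in B$, $a\in A$. *)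

Set Implicit Arguments.

Record UMagma := {
  um_car :> Type;
  um_op : um_car -> um_car -> um_car;
  um_zero : um_car;
  um_op0r : forall b, um_op b um_zero = b;
  um_op0l : forall b, um_op um_zero b = b
}.

Declare Scope um_scope.
Notation "a +m b" := (um_op _ a b) (at level 50, left associativity) : um_scope.
Notation "0m" := (um_zero _) : um_scope.
Open Scope um_scope.

Definition um_morph (M N : UMagma) (f : M -> N) : Prop :=
  (forall a b, f (a +m b) = f a +m f b) /\ f 0m = 0m.

Record RetractionPoint (X : Type) (B : UMagma) := {
  rp_A : UMagma;
  rp_k : X -> rp_A;
  rp_q : rp_A -> X;
  rp_s : B -> rp_A;
  rp_p : rp_A -> B;
  rp_s_morph : @um_morph B rp_A rp_s;
  rp_p_morph : @um_morph rp_A B rp_p;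
  rp_ps : forall b, rp_p (rp_s b) = b;
  rp_qk : forall x, rp_q (rp_k x) = x;
  rp_pk : forall x, rp_p (rp_k x) = 0m;
  rp_qs : forall b, rp_q (rp_s b) = rp_q 0m;
  rp_kqsp : forall a, rp_k (rp_q a) +m rp_s (rp_p a) = a
}.

Section Ops.
Variables (X : Type) (B : UMagma) (R : RetractionPoint X B).
Local Notation A := (rp_A R).
Local Notation k := (rp_k R).
Local Notation q := (rp_q R).
Local Notation s := (rp_s R).

Definition phi (x : X) (b : B) (x' : X) (b' : B) : X :=
  q ((k x +m s b) +m (k x' +m s b')).

Definition zX : X := q 0m.

Definition plus_b (b' : B) (x x' : X) : X := phi x 0m x' b'.
Definition xi_up (x : X) (b : B) (x' : X) : X := phi x b x' 0m.
Definition xi_down (b' : B) (b : B) (x' : X) : X := phi zX b x' b'.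
Definition rho_ud (b b' : B) (x : X) : X := phi x b zX b'.
Definition plusX (x x' : X) : X := phi x 0m x' 0m.
Definition xi (b : B) (x' : X) : X := phi zX b x' 0m.
Definition rho (b' : B) (x : X) : X := phi x 0m zX b'.

Definition cond_kks : Prop := forall (x x' : X) (b : B),
  k x +m (k x' +m s b) = (k x +m k x') +m s b.
Definition cond_sks : Prop := forall (x : X) (b b' : B),
  s b +m (k x +m s b') = (s b +m k x) +m s b'.
Definition cond_1ks : Prop := forall (a : A) (x : X) (b : B),
  a +m (k x +m s b) = (a +m k x) +m s b.
Definition cond_kss : Prop := forall (x : X) (b b' : B),
  k x +m (s b +m s b') = (k x +m s b) +m s b'.
Definition cond_ksk : Prop := forall (x x' : X) (b : B),
  k x +m (s b +m k x') = (k x +m s b) +m k x'.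
Definition cond_ks1 : Prop := forall (x : X) (b : B) (a : A),
  k x +m (s b +m a) = (k x +m s b) +m a.
End Ops.


(* Every [a : A] splits as [k (q a) +m s (p a)], and [p] of a word in [k]'s
   and [s]'s is the sum of its [s]-letters.  Each operation on [X] is [q] of
   such a word; substituting [k (q a) +m s (p a) = a] turns items 1-6 into
   one instance of the corresponding associativity condition.  Items 7-10
   chain items 1-6 using two unconditional absorption laws,
   [rho^b_b' (rho_b y) = rho^b_b' y] and [y +_c rho_c z = y +_c z]. *)

Section RetractionPointOps.

Variables (X : Type) (B : UMagma) (R : RetractionPoint X B).
Local Notation k := (rp_k R).
Local Notation q := (rp_q R).
Local Notation s := (rp_s R).
Local Notation p := (rp_p R).

Lemma s_op b b' : s (b +m b') = s b +m s b'.
Proof. exact (proj1 (rp_s_morph R) b b'). Qed.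

Lemma s_zero : s 0m = 0m.
Proof. exact (proj2 (rp_s_morph R)). Qed.

Lemma p_op a a' : p (a +m a') = p a +m p a'.
Proof. exact (proj1 (rp_p_morph R) a a'). Qed.

Lemma p_zero : p 0m = 0m.
Proof. exact (proj2 (rp_p_morph R)). Qed.

Lemma kq_s a b : p a = b -> k (q a) +m s b = a.
Proof. intros <-. apply rp_kqsp. Qed.

Lemma kq a : p a = 0m -> k (q a) = a.
Proof. intros Ha. rewrite <- (um_op0r _ (k (q a))), <- s_zero. exact (kq_s _ _ Ha). Qed.

Lemma k_zX : k (zX R) = 0m.
Proof. apply kq, p_zero. Qed.

Ltac simpl_p :=
  rewrite ?p_op, ?rp_pk, ?rp_ps, ?um_op0l, ?um_op0r; reflexivity.

Ltac unfold_ops :=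
  unfold plus_b, xi_up, xi_down, rho_ud, plusX, xi, rho, phi;
  rewrite ?k_zX, ?s_zero, ?um_op0l, ?um_op0r.

Lemma plus_bE b' x x' : plus_b R b' x x' = q (k x +m (k x' +m s b')).
Proof. unfold_ops. reflexivity. Qed.

Lemma xi_upE x b x' : xi_up R x b x' = q ((k x +m s b) +m k x').
Proof. unfold_ops. reflexivity. Qed.

Lemma xi_downE b' b x' : xi_down R b' b x' = q (s b +m (k x' +m s b')).
Proof. unfold_ops. reflexivity. Qed.

Lemma rho_udE b b' x : rho_ud R b b' x = q ((k x +m s b) +m s b').
Proof. unfold_ops. reflexivity. Qed.

Lemma plusXE x x' : plusX R x x' = q (k x +m k x').
Proof. unfold_ops. reflexivity. Qed.

Lemma xiE b x' : xi R b x' = q (s b +m k x').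
Proof. unfold_ops. reflexivity. Qed.

Lemma rhoE b' x : rho R b' x = q (k x +m s b').
Proof. unfold_ops. reflexivity. Qed.

Lemma k_plusX x x' : k (plusX R x x') = k x +m k x'.
Proof. rewrite plusXE. apply kq. simpl_p. Qed.

Lemma k_xi b x' : k (xi R b x') +m s b = s b +m k x'.
Proof. rewrite xiE. apply kq_s. simpl_p. Qed.

Lemma k_xi_up x b x' : k (xi_up R x b x') +m s b = (k x +m s b) +m k x'.
Proof. rewrite xi_upE. apply kq_s. simpl_p. Qed.

Lemma k_xi_down b' b x' :
  k (xi_down R b' b x') +m s (b +m b') = s b +m (k x' +m s b').
Proof. rewrite xi_downE. apply kq_s. simpl_p. Qed.

Lemma k_rho b' x : k (rho R b' x) +m s b' = k x +m s b'.
Proof. rewrite rhoE. apply kq_s. simpl_p. Qed.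

Lemma rho_ud_rho b b' y : rho_ud R b b' (rho R b y) = rho_ud R b b' y.
Proof. rewrite !rho_udE, k_rho. reflexivity. Qed.

Lemma plus_b_rho c x z : plus_b R c x (rho R c z) = plus_b R c x z.
Proof. rewrite !plus_bE, k_rho. reflexivity. Qed.

Lemma cond_1ks_kks : cond_1ks R -> cond_kks R.
Proof. intros H x x' b. apply H. Qed.

Lemma cond_ks1_kss : cond_ks1 R -> cond_kss R.
Proof. intros H x b b'. apply H. Qed.

Lemma plus_b_plusX (x x' : X) (b' : B) : cond_kks R -> plus_b R b' x x' = rho R b' (plusX R x x').
Proof. intros H. rewrite plus_bE, rhoE, k_plusX, H. reflexivity. Qed.

Lemma xi_down_rho_ud (x' : X) (b b' : B) : cond_sks R -> xi_down R b' b x' = rho_ud R b b' (xi R b x').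
Proof. intros H. rewrite xi_downE, rho_udE, k_xi, H. reflexivity. Qed.

Lemma phi_rho_ud_xi_up (x x' : X) (b b' : B) : cond_1ks R -> phi R x b x' b' = rho_ud R b b' (xi_up R x b x').
Proof. intros H. rewrite rho_udE, k_xi_up, <- H. reflexivity. Qed.

Lemma rho_ud_rho_op (x : X) (b b' : B) : cond_kss R -> rho_ud R b b' x = rho R (b +m b') x.
Proof. intros H. rewrite rho_udE, rhoE, s_op, H. reflexivity. Qed.

Lemma xi_up_plus_b (x x' : X) (b : B) : cond_ksk R -> xi_up R x b x' = plus_b R b x (xi R b x').
Proof. intros H. rewrite xi_upE, plus_bE, k_xi, H. reflexivity. Qed.

Lemma phi_plus_b_xi_down (x x' : X) (b b' : B) :
  cond_ks1 R -> phi R x b x' b' = plus_b R (b +m b') x (xi_down R b' b x').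
Proof. intros H. rewrite plus_bE, k_xi_down, H. reflexivity. Qed.

Lemma xi_up_rho_plusX (x x' : X) (b : B) :
  cond_kks R -> cond_ksk R -> xi_up R x b x' = rho R b (plusX R x (xi R b x')).
Proof. intros Hkks Hksk. rewrite xi_up_plus_b, plus_b_plusX; auto. Qed.

Lemma xi_down_rho (x' : X) (b b' : B) :
  cond_sks R -> cond_kss R -> xi_down R b' b x' = rho R (b +m b') (xi R b x').
Proof. intros Hsks Hkss. rewrite xi_down_rho_ud, rho_ud_rho_op; auto. Qed.

Lemma phi_rho_plusX_of_1ks (x x' : X) (b b' : B) : cond_1ks R -> cond_kss R -> cond_ksk R ->
  phi R x b x' b' = rho R (b +m b') (plusX R x (xi R b x')).
Proof.
  intros H1ks Hkss Hksk.
  rewrite phi_rho_ud_xi_up, xi_up_rho_plusX, rho_ud_rho, rho_ud_rho_op;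
    auto using cond_1ks_kks.
Qed.

Lemma phi_rho_plusX_of_ks1 (x x' : X) (b b' : B) : cond_ks1 R -> cond_kks R -> cond_sks R ->
  phi R x b x' b' = rho R (b +m b') (plusX R x (xi R b x')).
Proof.
  intros Hks1 Hkks Hsks.
  rewrite phi_plus_b_xi_down, xi_down_rho, plus_b_rho, plus_b_plusX;
    auto using cond_ks1_kss.
Qed.

End RetractionPointOps.

Theorem proposition6p1 (X : Type) (B : UMagma) (R : RetractionPoint X B) :
  forall (x x' : X) (b b' : B),
  (cond_kks R -> plus_b R b' x x' = rho R b' (plusX R x x')) /\
  (cond_sks R -> xi_down R b' b x' = rho_ud R b b' (xi R b x')) /\
  (cond_1ks R -> phi R x b x' b' = rho_ud R b b' (xi_up R x b x')) /\
  (cond_kss R -> rho_ud R b b' x = rho R (b +m b') x) /\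
  (cond_ksk R -> xi_up R x b x' = plus_b R b x (xi R b x')) /\
  (cond_ks1 R -> phi R x b x' b' = plus_b R (b +m b') x (xi_down R b' b x')) /\
  (cond_kks R -> cond_ksk R -> xi_up R x b x' = rho R b (plusX R x (xi R b x'))) /\
  (cond_sks R -> cond_kss R -> xi_down R b' b x' = rho R (b +m b') (xi R b x')) /\
  (cond_1ks R -> cond_kss R -> cond_ksk R ->
     phi R x b x' b' = rho R (b +m b') (plusX R x (xi R b x'))) /\
  (cond_ks1 R -> cond_kks R -> cond_sks R ->
     phi R x b x' b' = rho R (b +m b') (plusX R x (xi R b x'))).
Proof.
  intros x x' b b'.
  repeat split.
  - apply plus_b_plusX.
  - apply xi_down_rho_ud.
  - apply phi_rho_ud_xi_up.
  - apply rho_ud_rho_op.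
  - apply xi_up_plus_b.
  - apply phi_plus_b_xi_down.
  - apply xi_up_rho_plusX.
  - apply xi_down_rho.
  - apply phi_rho_plusX_of_1ks.
  - apply phi_rho_plusX_of_ks1.
Qed.
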